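(* Let $n\ge2$ and $\mathbf{F}\in\mathbb{R}^n$ with $F_k>0$ for all $k$ and $F_k\ge F_{k+1}$ for $3\le k\le n-1$. Let $U_i=\frac{i}{3/F_1+\sum_{k=2}^i1/F_k}$ and $V_i=\frac{i-1}{\sum_{k=1}^i1/F_k}$ for $2\le i\le n$; let $u$ be the least index in $\arg\max_{2\le i\le n}U_i$ and $v$ the least index in $\arg\max_{2\le i\le n}V_i$. Assume $V_v>U_u$. Define $\boldsymbol\mu\in\mathbb{R}^n$ by $\mu_2=\frac{V_v}{F_1}-\frac12$, $\mu_k=1-\frac{V_v}{F_k}$ for $3\le k\le v$, and $\mu_k=0$ otherwise. Then: (1) $\mu_k\ge0$ for all $1\le k\le n$; (2) $F_1(\frac12+\mu_2)=F_2\big(\frac12-\mu_2+\sum_{i=3}^v\mu_i\big)=F_k(1-\mu_k)=V_v$ for all $3\le k\le v$; (3) $F_k\le V_v$ for all $v+1\le k\le n$.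
   Context: Note $V_v=\frac{v-1}{\sum_{k=1}^v1/F_k}$. *)

(* F is 1-indexed: F : nat -> R, only F 1 .. F n matter. *)
From mathcomp Require Import all_boot all_order all_algebra.
Set Implicit Arguments. Unset Strict Implicit. Unset Printing Implicit Defensive.
Import Order.TTheory GRing.Theory Num.Theory.
Local Open Scope ring_scope.

Definition Useq (R : realFieldType) (F : nat -> R) (i : nat) : R :=
  i%:R / (3 / F 1%N + \sum_(2 <= k < i.+1) 1 / F k).

Definition Vseq (R : realFieldType) (F : nat -> R) (i : nat) : R :=
  (i.-1)%:R / (\sum_(1 <= k < i.+1) 1 / F k).

Definition least_argmax (R : realFieldType) (W : nat -> R) (n m : nat) : Prop :=
  [/\ (2 <= m <= n)%N,
      (forall i, (2 <= i <= n)%N -> W i <= W m) &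
      (forall i, (2 <= i < m)%N -> W i < W m)].

Definition mu (R : realFieldType) (F : nat -> R) (v k : nat) : R :=
  if k == 2%N then Vseq F v / F 1%N - 1 / 2
  else if (3 <= k <= v)%N then 1 - Vseq F v / F k
  else 0.

From mathcomp Require Import all_boot all_order all_algebra.
From mathcomp Require Import lra ring zify.
Set Implicit Arguments. Unset Strict Implicit. Unset Printing Implicit Defensive.
Import Order.TTheory GRing.Theory Num.Theory.
Local Open Scope ring_scope.

(* With S_i = sum_(k <= i) 1/F_k, both V_(i+1) = ((i-1) + 1)/(S_i + 1/F_(i+1))
   and U_i = ((i-1) + 1)/(S_i + 2/F_1) are mediants: of V_i and F_(i+1), resp.
   of V_i and F_1/2.  A mediant lies strictly between the two fractions it
   combines, or equals both.  So U_v <= U_u < V_v forces F_1/2 < V_v, i.e.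
   mu_2 >= 0; V_(v-1) < V_v forces V_v < F_v <= F_k for 3 <= k <= v, i.e.
   mu_k >= 0; and V_(v+1) <= V_v forces F_k <= F_(v+1) <= V_v for k > v.
   The identities (2) are algebra, using V_v S_v = v - 1. *)

Section Mediant.
Variables (R : realFieldType) (a b c d : R).
Hypotheses (b_gt0 : 0 < b) (d_gt0 : 0 < d).

Lemma sub_mediant : a / b - (a + c) / (b + d) = d / (b + d) * (a / b - c / d).
Proof.
have bd_gt0 : 0 < b + d by rewrite addr_gt0.
by field; rewrite !gt_eqF.
Qed.

Lemma mediant_weight_gt0 : 0 < d / (b + d).
Proof. by rewrite divr_gt0 // addr_gt0. Qed.

Lemma ler_mediantl : ((a + c) / (b + d) <= a / b) = (c / d <= a / b).
Proof. by rewrite -subr_ge0 sub_mediant pmulr_rge0 ?mediant_weight_gt0 // subr_ge0. Qed.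

Lemma ltr_mediantl : ((a + c) / (b + d) < a / b) = (c / d < a / b).
Proof. by rewrite -subr_gt0 sub_mediant pmulr_rgt0 ?mediant_weight_gt0 // subr_gt0. Qed.

End Mediant.

Lemma mediant_ltr (R : realFieldType) (a b c d : R) : 0 < b -> 0 < d ->
  a / b < (a + c) / (b + d) -> (a + c) / (b + d) < c / d.
Proof.
move=> b_gt0 d_gt0; rewrite ltNge ler_mediantl // -ltNge => ab_lt_cd.
by rewrite addrC [b + d]addrC ltr_mediantl.
Qed.

Section PartialSums.
Variables (R : realFieldType) (n : nat) (F : nat -> R).
Hypothesis F_gt0 : forall k, (1 <= k <= n)%N -> 0 < F k.

Definition Ssum (i : nat) : R := \sum_(1 <= k < i.+1) 1 / F k.

Lemma Ssum_gt0 i : (1 <= i <= n)%N -> 0 < Ssum i.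
Proof.
move=> /andP[i_ge1 i_le_n]; rewrite /Ssum big_ltn ?ltnS //.
rewrite ltr_pwDl ?divr_gt0 ?F_gt0 ?(leq_trans i_ge1 i_le_n) //.
rewrite big_nat sumr_ge0 // => k /andP[k_ge2 k_le_i].
by rewrite divr_ge0 // ltW // F_gt0 //; lia.
Qed.

Lemma SsumS i : Ssum i.+1 = Ssum i + 1 / F i.+1.
Proof. by rewrite /Ssum big_nat_recr. Qed.

Lemma Ssum_split i : (2 <= i)%N ->
  Ssum i = 1 / F 1%N + (1 / F 2%N + \sum_(3 <= k < i.+1) 1 / F k).
Proof.
move=> i_ge2; rewrite /Ssum big_ltn; last lia.
by rewrite big_ltn //; lia.
Qed.

Lemma VseqE i : Vseq F i = i.-1%:R / Ssum i.
Proof. by []. Qed.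

Lemma Vseq_mulSsum i : (1 <= i <= n)%N -> Vseq F i * Ssum i = i.-1%:R.
Proof. by move=> hi; rewrite VseqE mulfVK // gt_eqF // Ssum_gt0. Qed.

Lemma VseqS_mediant i : (1 <= i)%N ->
  Vseq F i.+1 = (i.-1%:R + 1) / (Ssum i + 1 / F i.+1).
Proof. by move=> i_ge1; rewrite /Vseq -/(Ssum i.+1) SsumS natr1 prednK. Qed.

Lemma Useq_mediant i : (2 <= i)%N ->
  Useq F i = (i.-1%:R + 1) / (Ssum i + 2 / F 1%N).
Proof.
move=> i_ge2; rewrite /Useq natr1 prednK; last lia.
rewrite /Ssum [in RHS]big_ltn; last lia.
by congr (_ / _); ring.
Qed.

Lemma Vseq_succ_leE i : (1 <= i < n)%N ->
  (Vseq F i.+1 <= Vseq F i) = (F i.+1 <= Vseq F i).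
Proof.
move=> /andP[i_ge1 i_lt_n]; have Fi1_gt0 : 0 < F i.+1 by rewrite F_gt0 // i_lt_n.
rewrite VseqS_mediant // VseqE ler_mediantl //; last by rewrite divr_gt0.
  by rewrite !div1r invrK.
by rewrite Ssum_gt0 // i_ge1 ltnW.
Qed.

Lemma Vseq_succ_lt_F i : (1 <= i < n)%N ->
  Vseq F i < Vseq F i.+1 -> Vseq F i.+1 < F i.+1.
Proof.
move=> /andP[i_ge1 i_lt_n]; have Fi1_gt0 : 0 < F i.+1 by rewrite F_gt0 // i_lt_n.
rewrite VseqS_mediant // VseqE => /mediant_ltr.
rewrite !div1r invrK; apply; last by rewrite invr_gt0.
by rewrite Ssum_gt0 // i_ge1 ltnW.
Qed.

Lemma half_F1_lt_Vseq i : (2 <= i <= n)%N ->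
  Useq F i < Vseq F i -> F 1%N / 2 < Vseq F i.
Proof.
move=> /andP[i_ge2 i_le_n].
have F1_gt0 : 0 < F 1%N by rewrite F_gt0 //; lia.
rewrite Useq_mediant // VseqE ltr_mediantl; last by rewrite divr_gt0.
  by rewrite div1r invf_div.
by rewrite Ssum_gt0 //; lia.
Qed.

End PartialSums.

Lemma F_nonincr (R : realFieldType) (n : nat) (F : nat -> R) :
  (forall k, (3 <= k <= n.-1)%N -> F k.+1 <= F k) ->
  forall a b, (3 <= a)%N -> (a <= b <= n)%N -> F b <= F a.
Proof.
move=> F_step a b a_ge3 /andP[]; elim: b => [|b IH] a_le_b b_le_n; first lia.
case: (ltngtP a b.+1) a_le_b => // [a_lt_b1 _|-> _]; last by [].
apply: le_trans (IH a_lt_b1 (ltnW b_le_n)); apply: F_step; lia.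
Qed.

Section MuBalance.
Variables (R : realFieldType) (n v : nat) (F : nat -> R).
Hypothesis F_gt0 : forall k, (1 <= k <= n)%N -> 0 < F k.
Hypotheses (v_ge2 : (2 <= v)%N) (v_le_n : (v <= n)%N).

Lemma mu2E : mu F v 2 = Vseq F v / F 1%N - 1 / 2.
Proof. by []. Qed.

Lemma mu_midE k : (3 <= k <= v)%N -> mu F v k = 1 - Vseq F v / F k.
Proof. by move=> hk; rewrite /mu hk; case: eqP => // k2; move: hk; rewrite k2. Qed.

Lemma F_mid_gt0 k : (1 <= k <= v)%N -> 0 < F k.
Proof. by move=> hk; apply: F_gt0; lia. Qed.

Lemma mu_ge0 : F 1%N / 2 <= Vseq F v ->
  (forall k, (3 <= k <= v)%N -> Vseq F v <= F k) -> forall k, 0 <= mu F v k.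
Proof.
move=> half_F1_le Vv_le_F k; case: (boolP (k == 2%N)) => [/eqP -> | k_neq2].
  have F1_gt0 : 0 < F 1%N by apply: F_mid_gt0; lia.
  by rewrite mu2E subr_ge0 ler_pdivlMr //; lra.
case: (boolP (3 <= k <= v)%N) => hk; last by rewrite /mu (negbTE k_neq2) (negbTE hk).
have Fk_gt0 : 0 < F k by apply: F_mid_gt0; lia.
by rewrite mu_midE // subr_ge0 ler_pdivrMr // mul1r Vv_le_F.
Qed.

Lemma F1_mu2 : F 1%N * (1 / 2 + mu F v 2) = Vseq F v.
Proof.
have F1_gt0 : 0 < F 1%N by apply: F_mid_gt0; lia.
by rewrite mu2E; field; rewrite gt_eqF.
Qed.

Lemma F_mid_mu k : (3 <= k <= v)%N -> F k * (1 - mu F v k) = Vseq F v.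
Proof.
move=> hk; have Fk_gt0 : 0 < F k by apply: F_mid_gt0; lia.
by rewrite mu_midE //; field; rewrite gt_eqF.
Qed.

Lemma sum_mu_mid : \sum_(3 <= i < v.+1) mu F v i
  = (v.+1 - 3)%:R - Vseq F v * \sum_(3 <= i < v.+1) 1 / F i.
Proof.
rewrite mulr_sumr -sumr_const_nat -sumrB big_nat [RHS]big_nat.
by apply: eq_bigr => i hi; rewrite mu_midE // mulrA mulr1.
Qed.

Lemma F2_mu : F 2%N * (1 / 2 - mu F v 2 + \sum_(3 <= i < v.+1) mu F v i) = Vseq F v.
Proof.
have F1_gt0 : 0 < F 1%N by apply: F_mid_gt0; lia.
have F2_gt0 : 0 < F 2%N by apply: F_mid_gt0; lia.
have v_pred : v.-1%:R = (v.+1 - 3)%:R + 1 :> R by rewrite natr1; congr _%:R; lia.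
have VvS : Vseq F v * Ssum F v = v.-1%:R by apply: (Vseq_mulSsum F_gt0); lia.
rewrite Ssum_split // v_pred in VvS; rewrite sum_mu_mid mu2E.
set V := Vseq F v in VvS *; set X := \sum_(3 <= i < v.+1) _ in VvS *.
have -> : 1 / 2 - (V / F 1%N - 1 / 2) + ((v.+1 - 3)%:R - V * X) = V / F 2%N
  by lra.
by field; rewrite gt_eqF.
Qed.

End MuBalance.

Section ArgmaxV.
Variables (R : realFieldType) (n v : nat) (F : nat -> R).
Hypothesis F_gt0 : forall k, (1 <= k <= n)%N -> 0 < F k.
Hypothesis F_step : forall k, (3 <= k <= n.-1)%N -> F k.+1 <= F k.
Hypothesis v_argmax : least_argmax (Vseq F) n v.

Lemma Vseq_argmax_lt_F k : (3 <= k <= v)%N -> Vseq F v < F k.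
Proof.
case: v_argmax => /andP[v_ge2 v_le_n] _ V_least hk.
have Vv_lt_Fv : Vseq F v < F v.
  have := Vseq_succ_lt_F F_gt0 (i := v.-1); rewrite prednK; last by lia.
  by apply; [lia | apply: V_least; lia].
by apply: lt_le_trans Vv_lt_Fv (F_nonincr F_step (a := k) (b := v) _ _); lia.
Qed.

Lemma F_le_Vseq_argmax k : (v.+1 <= k <= n)%N -> F k <= Vseq F v.
Proof.
case: v_argmax => /andP[v_ge2 v_le_n] V_max _ hk.
have Fk_le : F k <= F v.+1 by apply: (F_nonincr F_step); lia.
apply: le_trans Fk_le _; rewrite -(Vseq_succ_leE F_gt0); last by lia.
by apply: V_max; lia.
Qed.

End ArgmaxV.

Theorem lemma7 (R : realFieldType) (n : nat) (F : nat -> R) (u v : nat)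
  (hn : (2 <= n)%N)
  (hpos : forall k, (1 <= k <= n)%N -> 0 < F k)
  (hmono : forall k, (3 <= k <= n.-1)%N -> F k.+1 <= F k)
  (hu : least_argmax (Useq F) n u)
  (hv : least_argmax (Vseq F) n v)
  (hVU : Useq F u < Vseq F v) :
  (forall k, (1 <= k <= n)%N -> 0 <= mu F v k)
  /\ [/\ F 1%N * (1 / 2 + mu F v 2) = Vseq F v,
         F 2%N * (1 / 2 - mu F v 2 + \sum_(3 <= i < v.+1) mu F v i) = Vseq F v
       & forall k, (3 <= k <= v)%N -> F k * (1 - mu F v k) = Vseq F v]
  /\ (forall k, (v.+1 <= k <= n)%N -> F k <= Vseq F v).
Proof.
have [/andP[v_ge2 v_le_n] _ _] := hv.
have [_ U_max _] := hu.
have half_F1_lt : F 1%N / 2 < Vseq F v.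
  apply: (half_F1_lt_Vseq hpos (i := v)); first by rewrite v_ge2.
  by apply: le_lt_trans hVU; apply: U_max; rewrite v_ge2.
split; last split.
- move=> k _; apply: (mu_ge0 hpos) => // [|j hj]; first exact: ltW.
  exact/ltW/(Vseq_argmax_lt_F hpos hmono hv).
- split; [exact: (F1_mu2 hpos) | exact: (F2_mu hpos) | exact: (F_mid_mu hpos)].
- exact: (F_le_Vseq_argmax hpos hmono hv).
Qed.
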